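(* Let $d\ge 2$ and let $n$ be an integer with $1\le n<d$. Let $\{|\psi_k\rangle\}_{k=1}^{d^2}$ be a complete orthonormal basis of $\mathbb{C}^d\otimes\mathbb{C}^d$ consisting of maximally entangled states. Regard $\mathbb{C}^d\otimes\mathbb{C}^d$ as the subspace of $\mathbb{C}^d\otimes\mathbb{C}^{d+n}$ spanned by $|i\rangle|j\rangle$ with $0\le i,j\le d-1$ (where $\{|j\rangle\}_{j=0}^{d+n-1}$ is an orthonormal basis of $\mathbb{C}^{d+n}$). Then $\{|\psi_k\rangle\}_{k=1}^{d^2}$ is an unextendible maximally entangled basis of $\mathbb{C}^d\otimes\mathbb{C}^{d+n}$.
   Context: In $\mathbb{C}^{d_1}\otimes\mathbb{C}^{d_2}$ with $d_1\le d_2$, a pure state is maximally entangled if it has $d_1$ nonzero Schmidt coefficients, all equal (to $1/\sqrt{d_1}$). An unextendible maximally entangled basis (UMEB) of $\mathbb{C}^{d_1}\otimes\mathbb{C}^{d_2}$ is a set of mutually orthogonal maximally entangled states spanning a proper subspace of $\mathbb{C}^{d_1}\otimes\mathbb{C}^{d_2}$ such that the orthogonal complement of this span contains no maximally entangled state. *)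

From HB Require Import structures.
From mathcomp Require Import all_boot all_order all_algebra.
Set Implicit Arguments. Unset Strict Implicit. Unset Printing Implicit Defensive.
Import Order.TTheory GRing.Theory Num.Theory.
Local Open Scope ring_scope.

(* A vector |psi> = sum_{j,k} M j k |j>|k> of C^{d1} (x) C^{d2} is represented
   by its coefficient matrix M : 'M[C]_(d1,d2).  C is any numeric algebraically
   closed field (e.g. the complex numbers), with conjugation x^*. *)

Section QDefs.
Variable C : numClosedFieldType.

Definition adj (m n : nat) (A : 'M[C]_(m, n)) : 'M[C]_(n, m) := (map_mx Num.conj A)^T.

Definition hinner (d1 d2 : nat) (u v : 'M[C]_(d1, d2)) : C :=
  \sum_(j < d1) \sum_(k < d2) Num.conj (u j k) * v j k.

(* Maximally entangled (d1 <= d2): Schmidt decomposition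
   psi = sum_{i<d1} (1/sqrt d1) |a_i>|b_i> with {a_i} orthonormal in C^{d1}
   (columns of A) and {b_i} orthonormal in C^{d2} (rows of B), i.e. d1 nonzero
   Schmidt coefficients all equal to 1/sqrt d1. *)
Definition max_entangled (d1 d2 : nat) (M : 'M[C]_(d1, d2)) : Prop :=
  exists (A : 'M[C]_d1) (B : 'M[C]_(d1, d2)),
    adj A *m A = 1%:M /\ B *m adj B = 1%:M /\
    M = (sqrtC (d1%:R))^-1 *: (A *m B).

Definition in_span (I : finType) (d1 d2 : nat) (S : I -> 'M[C]_(d1, d2))
  (v : 'M[C]_(d1, d2)) : Prop :=
  exists c : I -> C, v = \sum_(i : I) c i *: S i.

Definition orthonormal (I : finType) (d1 d2 : nat) (S : I -> 'M[C]_(d1, d2)) : Prop :=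
  forall i j : I, hinner (S i) (S j) = (i == j)%:R.

Definition orthonormal_basis (I : finType) (d1 d2 : nat) (S : I -> 'M[C]_(d1, d2)) : Prop :=
  orthonormal S /\ forall v, in_span S v.

Definition UMEB (I : finType) (d1 d2 : nat) (S : I -> 'M[C]_(d1, d2)) : Prop :=
  [/\ (d1 <= d2)%N,
      (forall i, max_entangled (S i)),
      (forall i j, i != j -> hinner (S i) (S j) = 0),
      (exists v, ~ in_span S v) &
      (forall phi, (forall i, hinner (S i) phi = 0) -> ~ max_entangled phi)].

End QDefs.

(* Embedding C^d (x) C^d into C^d (x) C^{d+n} as span{|i>|j> : i,j <= d-1}:
   the coefficient matrix is padded with n zero columns. *)
Definition embed (C : numClosedFieldType) (d n : nat) (M : 'M[C]_d) : 'M[C]_(d, d + n) :=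
  row_mx M 0.

From Pilot Require Import Defs.
From mathcomp Require Import all_boot all_order all_algebra.
Import GRing.Theory Num.Theory.
Set Implicit Arguments. Unset Strict Implicit.
Local Open Scope ring_scope.

(* A state orthogonal to the embedded basis of C^d (x) C^d has a vanishing
   d x d block, so in its Schmidt form (1/sqrt d) A B the isometry rows B are
   supported on the last n coordinates of C^{d+n}.  Then d orthonormal rows live
   in an n-dimensional space, forcing d <= n, which contradicts n < d. *)

Section MaxEntangledEmbedding.
Variable C : numClosedFieldType.

Lemma hinner0l m n (u : 'M[C]_(m, n)) : hinner 0 u = 0.
Proof. by rewrite /hinner big1 // => j _; rewrite big1 // => k _; rewrite mxE rmorph0 mul0r. Qed.

Lemma hinner_row_mx m n1 n2 (a c : 'M[C]_(m, n1)) (b e : 'M[C]_(m, n2)) :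
  hinner (row_mx a b) (row_mx c e) = hinner a c + hinner b e.
Proof.
rewrite /hinner -big_split /=; apply: eq_bigr => j _; rewrite big_split_ord /=.
by congr (_ + _); apply: eq_bigr => k _; rewrite ?row_mxEl ?row_mxEr.
Qed.

Lemma hinner_row_mx0l m n1 n2 (a : 'M[C]_(m, n1)) (phi : 'M[C]_(m, n1 + n2)) :
  hinner (row_mx a 0) phi = hinner a (lsubmx phi).
Proof. by rewrite -[phi in LHS]hsubmxK hinner_row_mx hinner0l addr0. Qed.

Lemma hinner_sumr (I : finType) m n (u : 'M[C]_(m, n)) (c : I -> C)
    (v : I -> 'M[C]_(m, n)) :
  hinner u (\sum_i c i *: v i) = \sum_i c i * hinner u (v i).
Proof.
rewrite /hinner.
transitivity (\sum_(j < m) \sum_(k < n) \sum_i c i * (Num.conj (u j k) * v i j k)).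
  apply: eq_bigr => j _; apply: eq_bigr => k _; rewrite summxE mulr_sumr.
  by apply: eq_bigr => i _; rewrite mxE mulrCA.
under eq_bigr do rewrite exchange_big; rewrite exchange_big.
by apply: eq_bigr => i _; rewrite mulr_sumr; apply: eq_bigr => j _; rewrite mulr_sumr.
Qed.

Lemma orthonormal_coord (I : finType) m n (S : I -> 'M[C]_(m, n)) (c : I -> C) j :
  Defs.orthonormal S -> hinner (S j) (\sum_i c i *: S i) = c j.
Proof.
move=> orthS; rewrite hinner_sumr (bigD1 j) //= orthS eqxx mulr1 big1 ?addr0 //.
by move=> i ij; rewrite orthS eq_sym (negbTE ij) mulr0.
Qed.

Lemma orthonormal_basis_orth0 (I : finType) m n (S : I -> 'M[C]_(m, n)) v :
  orthonormal_basis S -> (forall i, hinner (S i) v = 0) -> v = 0.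
Proof.
move=> [orthS spanS] v_orth; have [c def_v] := spanS v.
have c0 i : c i = 0 by rewrite -(orthonormal_coord c i orthS) -def_v v_orth.
by rewrite def_v big1 // => i _; rewrite c0 scale0r.
Qed.

Lemma row_mx0_not_spanning (I : finType) m n1 n2 (T : I -> 'M[C]_(m, n1)) :
  (0 < m)%N -> (0 < n2)%N ->
  exists v, ~ in_span (fun i => row_mx (T i) (0 : 'M_(m, n2))) v.
Proof.
move=> m_gt0 n2_gt0; exists (row_mx 0 (const_mx 1)); case=> c /matrixP.
move=> /(_ (Ordinal m_gt0) (rshift n1 (Ordinal n2_gt0))) /eqP.
rewrite row_mxEr mxE summxE big1 ?oner_eq0 // => i _.
by rewrite mxE row_mxEr mxE mulr0.
Qed.

Lemma adj_row_mx m n1 n2 (X : 'M[C]_(m, n1)) (Y : 'M[C]_(m, n2)) :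
  adj (row_mx X Y) = col_mx (adj X) (adj Y).
Proof. by rewrite /adj map_row_mx tr_row_mx. Qed.

Lemma mulmx_adj1_leq m n (B : 'M[C]_(m, n)) : B *m adj B = 1%:M -> (m <= n)%N.
Proof.
move=> isoB; rewrite -[m](mxrank1 C) -isoB.
exact: leq_trans (mxrankM_maxl _ _) (rank_leq_col B).
Qed.

Lemma max_entangled_row_mx0 m n1 n2 (M : 'M[C]_(m, n1)) :
  max_entangled M -> max_entangled (row_mx M (0 : 'M_(m, n2))).
Proof.
case=> A [B [isoA [isoB ->]]]; exists A, (row_mx B 0); do !split => //.
  by rewrite adj_row_mx mul_row_col mul0mx addr0 isoB.
by rewrite mul_mx_row mulmx0 scale_row_mx scaler0.
Qed.

Lemma max_entangled_lsubmx0 m n1 n2 (phi : 'M[C]_(m, n1 + n2)) :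
  (0 < m)%N -> max_entangled phi -> lsubmx phi = 0 -> (m <= n2)%N.
Proof.
move=> m_gt0 [A [B [isoA [isoB def_phi]]]] phiL0.
have s_neq0 : sqrtC (m%:R : C) != 0 by rewrite sqrtC_eq0 pnatr_eq0 -lt0n.
have ABL0 : A *m lsubmx B = 0.
  move: phiL0; rewrite def_phi -[B in A *m B](hsubmxK B) mul_mx_row scale_row_mx.
  by rewrite row_mxKl => /eqP; rewrite scaler_eq0 invr_eq0 (negbTE s_neq0) => /eqP.
have BL0 : lsubmx B = 0 by rewrite -[lsubmx B]mul1mx -isoA -mulmxA ABL0 mulmx0.
apply: (@mulmx_adj1_leq _ _ (rsubmx B)); rewrite -isoB -[B in RHS]hsubmxK BL0.
by rewrite adj_row_mx mul_row_col mul0mx add0r.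
Qed.

End MaxEntangledEmbedding.

Theorem proposition2 (C : numClosedFieldType) (d n : nat)
  (hd : (2 <= d)%N) (hn1 : (1 <= n)%N) (hnd : (n < d)%N)
  (psi : 'I_(d * d) -> 'M[C]_d) :
  orthonormal_basis psi ->
  (forall k, max_entangled (psi k)) ->
  UMEB (fun k => embed n (psi k)).
Proof.
move=> basis_psi me_psi; have d_gt0 : (0 < d)%N by apply: leq_trans hd.
split.
- exact: leq_addr.
- by move=> k; apply: max_entangled_row_mx0 (me_psi k).
- move=> i j ij; rewrite /embed hinner_row_mx0l row_mxKl.
  by rewrite basis_psi.1 (negbTE ij).
- exact: row_mx0_not_spanning.
- move=> phi phi_orth me_phi; suff : (d <= n)%N by rewrite leqNgt hnd.
  apply: (max_entangled_lsubmx0 d_gt0 me_phi).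
  apply: (orthonormal_basis_orth0 basis_psi) => k.
  by rewrite -hinner_row_mx0l phi_orth.
Qed.
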